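(* Let $A$ be a Keigher ring, $X=\operatorname{Spec}^\Delta A$, and let $D$ be a differential subring of $\mathcal O(X)$ containing $\iota(A)$. Let $\iota\colon A\to D$ denote the corresponding homomorphism. Then $\iota^*\colon\operatorname{Spec}^\Delta D\to\operatorname{Spec}^\Delta A$, $\mathfrak q\mapsto\iota^{-1}(\mathfrak q)$, is a homeomorphism.
   Context: All rings are commutative with unit. A differential ring is a ring with finitely many pairwise commuting derivations. A Keigher ring is a differential ring in which the radical $\{x: x^n\in\mathfrak a\text{ for some }n\}$ of every differential ideal $\mathfrak a$ is again a differential ideal. $\operatorname{Spec}^\Delta R$ is the set of prime ideals of a differential ring $R$ closed under all derivations, with the Kolchin topology (closed sets $V(E)=\{\mathfrak p: E\subseteq\mathfrak p\}$). For $\mathfrak p\in X$, $A_{\mathfrak p}$ is the localization at $A\setminus\mathfrak p$. Structure sheaf: for open $U\subseteq X$, $\mathcal O(U)$ is the set of functions $f$ on $U$ with $f(\mathfrak p)\in A_{\mathfrak p}$ that are regular at every point of $U$, where $f$ is regular at $\mathfrak p$ if there exist an open neighborhood $W\subseteq U$ of $\mathfrak p$ and $a,b\in A$ with $b\notin\mathfrak q$ and $f(\mathfrak q)=a/b$ in $A_{\mathfrak q}$ for all $\mathfrak q\in W$; it is a differential ring with pointwise operations and derivations. The differential homomorphism $\iota\colon A\to\mathcal O(X)$ sends $a$ to the function $\mathfrak p\mapsto a/1\in A_{\mathfrak p}$. *)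

From HB Require Import structures.
From mathcomp Require Import all_boot all_order all_algebra.
Set Implicit Arguments. Unset Strict Implicit. Unset Printing Implicit Defensive.
Import GRing.Theory.
Local Open Scope ring_scope.

Definition seteq {T : Type} (P Q : T -> Prop) := forall x, P x <-> Q x.

Definition kclosed {T : Type} (spec : (T -> Prop) -> Prop)
    (C : (T -> Prop) -> Prop) :=
  exists E : T -> Prop, forall P, spec P -> (C P <-> (forall x, E x -> P x)).

(* f : spec_S -> spec_T is a homeomorphism (points are subsets, compared
   extensionally): well defined, bijective, continuous, and closed
   (= continuity of the inverse for a bijection). *)
Definition homeo {S T : Type} (specS : (S -> Prop) -> Prop)
    (closedS : ((S -> Prop) -> Prop) -> Prop)
    (specT : (T -> Prop) -> Prop) (closedT : ((T -> Prop) -> Prop) -> Prop)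
    (f : (S -> Prop) -> (T -> Prop)) :=
  (forall x, specS x -> specT (f x)) /\
  (forall x y, specS x -> specS y -> seteq (f x) (f y) -> seteq x y) /\
  (forall y, specT y -> exists x, specS x /\ seteq (f x) y) /\
  (forall C, closedT C -> closedS (fun x => C (f x))) /\
  (forall C, closedS C ->
     closedT (fun y => exists x, specS x /\ C x /\ seteq (f x) y)).

Section Diff.
Variables (A : comPzRingType) (m : nat) (d : 'I_m -> A -> A).

Definition is_derivation (f : A -> A) :=
  (forall x y, f (x + y) = f x + f y) /\
  (forall x y, f (x * y) = f x * y + x * f y).

Definition diff_structure :=
  (forall i, is_derivation (d i)) /\
  (forall i j x, d i (d j x) = d j (d i x)).

Definition ideal (I : A -> Prop) :=
  I 0 /\ (forall x y, I x -> I y -> I (x + y)) /\ (forall x y, I y -> I (x * y)).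
Definition diff_ideal (I : A -> Prop) := ideal I /\ forall i x, I x -> I (d i x).
Definition radical (I : A -> Prop) : A -> Prop := fun x => exists n, I (x ^+ n).
Definition keigher := forall I, diff_ideal I -> diff_ideal (radical I).
Definition prime_ideal (P : A -> Prop) :=
  ideal P /\ ~ P 1 /\ forall x y, P (x * y) -> P x \/ P y.
Definition dspec (P : A -> Prop) := prime_ideal P /\ forall i x, P x -> P (d i x).

Definition Xpt := {P : A -> Prop | dspec P}.

Definition openX (U : Xpt -> Prop) :=
  exists E : A -> Prop, forall p : Xpt, U p <-> ~ (forall x, E x -> proj1_sig p x).

(* Element a/b of A_P, represented as its equivalence class of pairs
   (z.1, z.2) with z.2 ∉ P and s (a z.2 - z.1 b) = 0 for some s ∉ P. *)
Definition frac (P : A -> Prop) (x : A * A) : A * A -> Prop :=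
  fun z => ~ P z.2 /\ exists s, ~ P s /\ s * (x.1 * z.2 - z.1 * x.2) = 0.

(* Functions f on X with f(p) ∈ A_p (an element of A_p is a class of pairs). *)
Definition sect := Xpt -> (A * A -> Prop).

Definition regular_at (f : sect) (p : Xpt) :=
  exists W : Xpt -> Prop, openX W /\ W p /\
    exists a b : A, forall q : Xpt, W q ->
      ~ proj1_sig q b /\ seteq (f q) (frac (proj1_sig q) (a, b)).

Definition Osec (f : sect) := forall p, regular_at f p.

Definition ladd (P : A -> Prop) (F G : A * A -> Prop) : A * A -> Prop :=
  fun z => exists x y, F x /\ G y /\ frac P (x.1 * y.2 + y.1 * x.2, x.2 * y.2) z.
Definition lmul (P : A -> Prop) (F G : A * A -> Prop) : A * A -> Prop :=
  fun z => exists x y, F x /\ G y /\ frac P (x.1 * y.1, x.2 * y.2) z.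
Definition lopp (P : A -> Prop) (F : A * A -> Prop) : A * A -> Prop :=
  fun z => exists x, F x /\ frac P (- x.1, x.2) z.
Definition lder (i : 'I_m) (P : A -> Prop) (F : A * A -> Prop) : A * A -> Prop :=
  fun z => exists x, F x /\
    frac P (d i x.1 * x.2 - x.1 * d i x.2, x.2 * x.2) z.

Definition s0 : sect := fun q => frac (proj1_sig q) (0, 1).
Definition s1 : sect := fun q => frac (proj1_sig q) (1, 1).
Definition sadd (f g : sect) : sect := fun q => ladd (proj1_sig q) (f q) (g q).
Definition smul (f g : sect) : sect := fun q => lmul (proj1_sig q) (f q) (g q).
Definition sopp (f : sect) : sect := fun q => lopp (proj1_sig q) (f q).
Definition sder (i : 'I_m) (f : sect) : sect :=
  fun q => lder i (proj1_sig q) (f q).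

Definition iotaO (a : A) : sect := fun q => frac (proj1_sig q) (a, 1).

Definition dsubring (D : sect -> Prop) :=
  (forall f, D f -> Osec f) /\ D s0 /\ D s1 /\
  (forall f g, D f -> D g -> D (sadd f g)) /\
  (forall f, D f -> D (sopp f)) /\
  (forall f g, D f -> D g -> D (smul f g)) /\
  (forall i f, D f -> D (sder i f)).

Definition dspecD (D : sect -> Prop) (Q : sect -> Prop) :=
  (forall f, Q f -> D f) /\ Q s0 /\
  (forall f g, Q f -> Q g -> Q (sadd f g)) /\
  (forall f g, D f -> Q g -> Q (smul f g)) /\
  ~ Q s1 /\
  (forall f g, D f -> D g -> Q (smul f g) -> Q f \/ Q g) /\
  (forall i f, Q f -> Q (sder i f)).

Definition iota_star (Q : sect -> Prop) : A -> Prop := fun a => Q (iotaO a).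

End Diff.

From Pilot Require Import Defs.
From HB Require Import structures.
From mathcomp Require Import all_boot all_order all_algebra ring.
From mathcomp Require Import boolp classical_sets.
Set Implicit Arguments. Unset Strict Implicit. Unset Printing Implicit Defensive.
Import GRing.Theory.
Local Open Scope ring_scope.
Local Open Scope classical_set_scope.

(* Everything rests on one fact about a differential prime Q of D with point
   p = iota^*(Q):  f ∈ Q  <->  f(p) lies in the maximal ideal of A_p
   ([mem_iff_vanishes]).  Near p write f = a / b on a basic open D(e); then
   g = iota(b) f - iota(a) ∈ D is 0 on D(e).  Covering X by finitely many basic
   opens on which g is a fixed fraction (quasi-compactness) and using that in a
   Keigher ring an element which is locally 0 on D(c) is killed by a power of
   c, some power of iota(e) g is the zero section, so g ∈ Q as e ∉ p.  Hence Q
   is determined by p, every p comes from {f ∈ D | f(p) ∈ p A_p}, and closed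
   sets correspond in both directions. *)

(* mathcomp's fraction library also exports a [frac]. *)
Local Notation frac := Defs.frac.

(* Derived from the library's version for
   families closed under all chain unions, applied to F together with set0. *)
Lemma maximal_member (T : Type) (F : set (set T)) (b : set T) : F b ->
  (forall G : set (set T), G `<=` F -> total_on G subset -> G !=set0 ->
     F (\bigcup_(X in G) X)) ->
  exists M, F M /\ forall J, F J -> M `<=` J -> J `<=` M.
Proof.
move=> Fb Fchain.
pose F0 := fun J : set T => F J \/ J = set0.
have [|M [F0M Mmax]] := @Zorn_bigcup T F0.
  move=> G GF0 Gtot.
  have [[X [GX FX]]|noF] := pselect (exists X, G X /\ F X); last first.
    right; apply/seteqP; split=> x // [Y GY Yx].
    by case: (GF0 Y GY) => [FY|Y0]; [case: noF; exists Y | rewrite Y0 in Yx].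
  left; have -> : \bigcup_(Y in G) Y = \bigcup_(Y in G `&` F) Y.
    apply/seteqP; split=> x [Y GY Yx]; last by exists Y => //; case: GY.
    by case: (GF0 Y GY) => [FY|Y0]; [exists Y | rewrite Y0 in Yx].
  apply: Fchain; [by move=> Y [] | | by exists X].
  by move=> Y Z [GY _] [GZ _]; apply: Gtot.
have maxM J : F J -> M `<=` J -> J `<=` M.
  by move=> FJ MJ; apply: contrapT => JM; exact: Mmax J (conj MJ JM) (or_introl FJ).
exists M; split=> //; case: F0M => // M0.
have [b0|bn0] := pselect (b `<=` M); last by case: bn0; apply: maxM Fb _; rewrite M0.
by rewrite M0 (_ : set0 = b) //; apply/seteqP; split=> //; rewrite -M0.
Qed.

Section DifferentialRing.
Variables (A : comPzRingType) (m : nat) (d : 'I_m -> A -> A).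
Hypothesis Hd : diff_structure d.

Lemma derD i x y : d i (x + y) = d i x + d i y. Proof. exact: (Hd.1 i).1. Qed.
Lemma derM i x y : d i (x * y) = d i x * y + x * d i y. Proof. exact: (Hd.1 i).2. Qed.
Lemma der0 i : d i 0 = 0.
Proof. by apply: (addrI (d i 0)); rewrite -derD !addr0. Qed.
Lemma derN i x : d i (- x) = - d i x.
Proof. by apply: (addrI (d i x)); rewrite -derD !subrr der0. Qed.
Lemma der1 i : d i 1 = 0.
Proof.
have := derM i 1 1; rewrite !mulr1 mul1r => h.
by apply: (addrI (d i 1)); rewrite -h addr0.
Qed.

(* An element that is an A-linear combination of zero elements is zero; used
   to derive ring identities from hypotheses, the identity itself by [ring]. *)
Lemma comb1_eq0 (E u p : A) : E = p * u -> u = 0 -> E = 0.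
Proof. by move=> -> ->; rewrite mulr0. Qed.
Lemma comb2_eq0 (E u v p q : A) : E = p * u + q * v -> u = 0 -> v = 0 -> E = 0.
Proof. by move=> -> -> ->; rewrite !mulr0 addr0. Qed.

Section Ideals.
Variable I : A -> Prop.
Hypothesis hI : ideal I.
Lemma ideal0 : I 0. Proof. exact: hI.1. Qed.
Lemma idealD {x y} : I x -> I y -> I (x + y). Proof. exact: hI.2.1. Qed.
Lemma idealM {x y} : I y -> I (x * y). Proof. exact: hI.2.2. Qed.
Lemma idealMr {x y} : I x -> I (x * y). Proof. by rewrite mulrC; apply: idealM. Qed.
Lemma idealN {x} : I x -> I (- x). Proof. by rewrite -mulN1r; apply: idealM. Qed.
Lemma idealB {x y} : I x -> I y -> I (x - y).
Proof. by move=> hx hy; apply: idealD hx (idealN hy). Qed.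
End Ideals.

Section PrimeIdeals.
Variable P : A -> Prop.
Hypothesis hP : prime_ideal P.
Lemma prime_ideal_ideal : ideal P. Proof. exact: hP.1. Qed.
Lemma prime_not1 : ~ P 1. Proof. exact: hP.2.1. Qed.
Lemma primeM x y : P (x * y) -> P x \/ P y. Proof. exact: hP.2.2. Qed.
Lemma prime_nM x y : ~ P x -> ~ P y -> ~ P (x * y). Proof. by move=> hx hy /primeM []. Qed.
Lemma prime_nX x n : ~ P x -> ~ P (x ^+ n).
Proof.
move=> hx; elim: n => [|n IH]; first by rewrite expr0; exact: prime_not1.
by rewrite exprS; apply: prime_nM.
Qed.
End PrimeIdeals.

Section Localization.
Variable P : A -> Prop.
Hypothesis hP : prime_ideal P.

Lemma frac_refl x : ~ P x.2 -> frac P x x.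
Proof. by move=> hx; split=> //; exists 1; split; [exact: prime_not1 | rewrite subrr mulr0]. Qed.

Lemma frac_sym x y : ~ P x.2 -> frac P x y -> frac P y x.
Proof.
move=> hx [hy [s [hs e]]]; split=> //; exists s; split=> //.
by apply: (comb1_eq0 (p := -1) _ e); ring.
Qed.

Lemma frac_trans x y z : frac P x y -> frac P y z -> frac P x z.
Proof.
move=> [hy [s [hs e1]]] [hz [t [ht e2]]]; split=> //; exists (s * t * y.2).
split; first by do 2 apply: prime_nM => //.
by apply: (comb2_eq0 (p := t * z.2) (q := s * x.2) _ e1 e2) => /=; ring.
Qed.

Lemma frac_class x y : ~ P x.2 -> frac P x y -> frac P x = frac P y.
Proof.
move=> hx hxy; apply/funext => z; apply/propext; split => h.
  exact: frac_trans (frac_sym hx hxy) h.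
exact: frac_trans hxy h.
Qed.

Lemma frac_add x y : ~ P x.2 -> ~ P y.2 ->
  ladd P (frac P x) (frac P y) = frac P (x.1 * y.2 + y.1 * x.2, x.2 * y.2).
Proof.
move=> hx hy; apply/funext => z; apply/propext; split; last first.
  by move=> hz; exists x, y; split; [exact: frac_refl | split; first exact: frac_refl].
move=> [x' [y' [[hx' [s [hs e1]]] [[hy' [t [ht e2]]] hz]]]].
apply: frac_trans hz; split; first exact: prime_nM.
exists (s * t); split; first exact: prime_nM.
by apply: (comb2_eq0 (p := t * y.2 * y'.2) (q := s * x.2 * x'.2) _ e1 e2) => /=; ring.
Qed.

Lemma frac_mul x y : ~ P x.2 -> ~ P y.2 ->
  lmul P (frac P x) (frac P y) = frac P (x.1 * y.1, x.2 * y.2).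
Proof.
move=> hx hy; apply/funext => z; apply/propext; split; last first.
  by move=> hz; exists x, y; split; [exact: frac_refl | split; first exact: frac_refl].
move=> [x' [y' [[hx' [s [hs e1]]] [[hy' [t [ht e2]]] hz]]]].
apply: frac_trans hz; split; first exact: prime_nM.
exists (s * t); split; first exact: prime_nM.
by apply: (comb2_eq0 (p := t * y.1 * y'.2) (q := s * x'.1 * x.2) _ e1 e2) => /=; ring.
Qed.

Lemma frac_opp x : ~ P x.2 -> lopp P (frac P x) = frac P (- x.1, x.2).
Proof.
move=> hx; apply/funext => z; apply/propext; split; last first.
  by move=> hz; exists x; split=> //; exact: frac_refl.
move=> [x' [[hx' [s [hs e1]]] hz]]; apply: frac_trans hz; split=> //.
by exists s; split=> //; apply: (comb1_eq0 (p := -1) _ e1) => /=; ring.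
Qed.

Lemma frac_der i x : ~ P x.2 ->
  lder d i P (frac P x) = frac P (d i x.1 * x.2 - x.1 * d i x.2, x.2 * x.2).
Proof.
move=> hx; apply/funext => z; apply/propext; split; last first.
  by move=> hz; exists x; split=> //; exact: frac_refl.
move=> [x' [[hx' [s [hs e1]]] hz]]; apply: frac_trans hz; split; first exact: prime_nM.
exists (s * s); split; first exact: prime_nM.
have := congr1 (d i) e1; rewrite der0 derM derD derN !derM => e2.
apply: (comb2_eq0 (p := x.2 * x'.2 * s)
  (q := - (x.2 * x'.2 * d i s) - (x'.2 * d i x.2 + x.2 * d i x'.2) * s) _ e2 e1) => /=.
by ring.
Qed.
End Localization.

Definition rad_closed (M : A -> Prop) := forall x n, M (x ^+ n) -> M x.

Definition colon (M : A -> Prop) (a : A) : A -> Prop := fun y => M (a * y).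

(* Colon ideals of radical differential ideals are radical differential
   ideals; stability under d i uses (a d y)^2 = (a d y) d(a y) - (d a d y)(a y). *)
Lemma colon_diff_ideal M a : diff_ideal d M -> rad_closed M -> diff_ideal d (colon M a).
Proof.
move=> [hM dM] rM; split; first split.
- by rewrite /colon mulr0; exact: ideal0.
- split; first by move=> x y hx hy; rewrite /colon mulrDr; apply: idealD.
  by move=> x y hy; rewrite /colon mulrCA; apply: idealM.
- move=> i y hy; have hdy : M (d i (a * y)) by apply: dM.
  apply: (rM _ 2); rewrite expr2.
  have -> : a * d i y * (a * d i y) =
    (a * d i y) * d i (a * y) - (d i a * d i y) * (a * y) by rewrite derM; ring.
  by apply: idealB => //; apply: idealM.
Qed.

Lemma colon_rad_closed M a : ideal M -> rad_closed M -> rad_closed (colon M a).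
Proof.
move=> hM rM x [|n] h; first by move: h; rewrite /colon expr0 mulr1 => /(idealMr hM).
apply: (rM _ n.+1); rewrite exprMn exprS -mulrA mulrCA.
exact: idealM.
Qed.

Lemma bigcup_diff_ideal (G : set (set A)) : G !=set0 -> total_on G subset ->
  (forall J, G J -> diff_ideal d J) -> diff_ideal d (\bigcup_(J in G) J).
Proof.
move=> [J0 GJ0] Gtot GD; have GI J : G J -> ideal J by move=> /GD [].
split; first split.
- by exists J0 => //; exact: ideal0 (GI J0 GJ0).
- split; last by move=> x y [J GJ hy]; exists J => //; exact: (idealM (GI J GJ) hy).
  move=> x y [J1 GJ1 hx] [J2 GJ2 hy].
  case: (Gtot _ _ GJ1 GJ2) => [J12|J21].
    by exists J2 => //; apply: (idealD (GI J2 GJ2) (J12 _ hx) hy).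
  by exists J1 => //; apply: (idealD (GI J1 GJ1) hx (J21 _ hy)).
- by move=> i x [J GJ hx]; exists J => //; exact: (GD _ GJ).2.
Qed.

Hypothesis HK : keigher d.

(* Differential ideals containing I and avoiding the powers of c; a maximal
   one is a differential prime ideal (Keigher's condition is what makes it
   radical, hence its colon ideals differential). *)
Section Avoiding.
Variables (I : A -> Prop) (c : A).
Hypotheses (hI : diff_ideal d I) (hc : forall n, ~ I (c ^+ n)).

Definition avoiding (J : A -> Prop) :=
  diff_ideal d J /\ I `<=` J /\ forall n, ~ J (c ^+ n).

Lemma exists_maximal_avoiding :
  exists M, avoiding M /\ forall J, avoiding J -> M `<=` J -> J `<=` M.
Proof.
apply: (maximal_member (b := I)); first by split=> //; split.
move=> G GF Gtot [J0 GJ0]; split; last split.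
- by apply: bigcup_diff_ideal => //; [exists J0 | move=> J /GF []].
- by move=> x hx; exists J0 => //; have [_ [IJ0 _]] := GF _ GJ0; exact: IJ0.
- by move=> n [J GJ hJ]; have [_ [_ nJ]] := GF _ GJ; exact: nJ hJ.
Qed.

Variable M : A -> Prop.
Hypotheses (hM : avoiding M) (Mmax : forall J, avoiding J -> M `<=` J -> J `<=` M).

(* M is radical: by Keigher's condition its radical is again avoiding. *)
Lemma maximal_avoiding_rad_closed : rad_closed M.
Proof.
have [MD [IM Mc]] := hM.
have radM : avoiding (radical M).
  split; first exact: HK.
  split; first by move=> y /IM My; exists 1%N; rewrite expr1.
  by move=> k [j hj]; apply: (Mc (k * j)%N); rewrite exprM.
move=> x n hx; apply: (Mmax radM) => [y My|]; last by exists n.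
by exists 1%N; rewrite expr1.
Qed.

(* If no a c^n lies in M, then (M : a) is avoiding, hence (M : a) = M. *)
Lemma maximal_avoiding_colon a : (forall n, ~ M (a * c ^+ n)) -> colon M a `<=` M.
Proof.
have [[MI Md] [IM _]] := hM; move=> ha; apply: Mmax.
  split; first exact: colon_diff_ideal (conj MI Md) maximal_avoiding_rad_closed.
  by split=> // y /IM; apply: (idealM MI).
by move=> y; apply: (idealM MI).
Qed.

(* M is prime: if x y ∈ M and y ∉ M, some x c^n lies in M, and then x ∈ (M : c^n) = M. *)
Lemma maximal_avoiding_dprime : dspec d M.
Proof.
have [MD [IM Mc]] := hM.
split; last exact: MD.2.
split; first exact: MD.1.
split; first by rewrite -(expr0 c); exact: Mc.
move=> x y Mxy; apply: contrapT => /not_orP [nx ny].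
have [n Mxc] : exists n, M (x * c ^+ n).
  apply: contrapT => /forallNP nxc; exact: ny (maximal_avoiding_colon nxc Mxy).
have ncc : forall k, ~ M (c ^+ n * c ^+ k) by move=> k; rewrite -exprD; exact: Mc.
by apply: nx; apply: (maximal_avoiding_colon ncc); rewrite /colon mulrC.
Qed.
End Avoiding.

Lemma exists_dprime_avoiding (I : A -> Prop) (c : A) :
  diff_ideal d I -> (forall n, ~ I (c ^+ n)) ->
  exists P, dspec d P /\ I `<=` P /\ ~ P c.
Proof.
move=> hI hc; have [M [hM Mmax]] := exists_maximal_avoiding hI hc.
exists M; split; first exact: maximal_avoiding_dprime hM Mmax.
have [_ [IM Mc]] := hM; split=> // Mc1; apply: (Mc 1%N); by rewrite expr1.
Qed.

Lemma zero_diff_ideal : diff_ideal d (fun y : A => y = 0).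
Proof.
split; last by move=> i x ->; rewrite der0.
split=> //; split; first by move=> x y -> ->; rewrite addr0.
by move=> x y ->; rewrite mulr0.
Qed.

(* If x becomes 0 in A_P for every differential prime P not containing c,
   then c x is nilpotent: otherwise a differential prime containing the
   colon ideal (nilradical : x) but not c contradicts the hypothesis. *)
Lemma locally_zero_nilpotent (x c : A) :
  (forall P, dspec d P -> ~ P c -> exists s, ~ P s /\ s * x = 0) ->
  exists n, (c * x) ^+ n = 0.
Proof.
move=> Hloc; pose N := radical (fun y : A => y = 0).
have ND : diff_ideal d N by apply: HK; exact: zero_diff_ideal.
have rN : rad_closed N by move=> y n [k hk]; exists (n * k)%N; rewrite exprM.
have NxD := colon_diff_ideal x ND rN.
have rNx := colon_rad_closed (a := x) ND.1 rN.
suff [k hk] : colon N x c by exists k; rewrite mulrC.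
apply: contrapT => nNxc.
have [P [hP [NxP Pc]]] := exists_dprime_avoiding NxD (fun n h => nNxc (rNx _ _ h)).
have [s [Ps sx0]] := Hloc P hP Pc.
by apply: Ps; apply: NxP; exists 1%N; rewrite expr1 mulrC.
Qed.

Inductive dgen (S : A -> Prop) : A -> Prop :=
  | dgen_gen x : S x -> dgen S x
  | dgen0 : dgen S 0
  | dgenD x y : dgen S x -> dgen S y -> dgen S (x + y)
  | dgenM x y : dgen S y -> dgen S (x * y)
  | dgen_der i x : dgen S x -> dgen S (d i x).

Lemma dgen_diff_ideal S : diff_ideal d (dgen S).
Proof.
by split; [split; [exact: dgen0 | split; [exact: dgenD | exact: dgenM]] | exact: dgen_der].
Qed.

Lemma dgen_min S (J : A -> Prop) : diff_ideal d J -> S `<=` J -> dgen S `<=` J.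
Proof.
move=> [hJ dJ] SJ x; elim=> {x}.
- by move=> x /SJ.
- exact: ideal0.
- by move=> x y _ hx _ hy; apply: idealD.
- by move=> x y _ hy; apply: idealM.
- by move=> i x _ hx; apply: dJ.
Qed.

Lemma dgen_finite S x : dgen S x ->
  exists l : seq A, (forall e, e \in l -> S e) /\ dgen (fun e => e \in l) x.
Proof.
have mono (l l' : seq A) :
    {subset l <= l'} -> dgen (fun e => e \in l) `<=` dgen (fun e => e \in l').
  move=> ll'; apply: dgen_min; first exact: dgen_diff_ideal.
  by move=> e /ll' le; apply: dgen_gen.
elim=> {x}.
- move=> x Sx; exists [:: x].
  by split; [move=> e; rewrite inE => /eqP -> | apply: dgen_gen; rewrite inE].
- by exists [::]; split=> //; exact: dgen0.
- move=> x y _ [l1 [S1 g1]] _ [l2 [S2 g2]]; exists (l1 ++ l2); split.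
    by move=> e; rewrite mem_cat => /orP [/S1|/S2].
  by apply: dgenD; [apply: mono g1 | apply: mono g2] => e he; rewrite mem_cat he ?orbT.
- by move=> x y _ [l [Sl g]]; exists l; split=> //; apply: dgenM.
- by move=> i x _ [l [Sl g]]; exists l; split=> //; apply: dgen_der.
Qed.

Lemma dspec_finite_cover (S : A -> Prop) :
  (forall P, dspec d P -> exists e, S e /\ ~ P e) ->
  exists l : seq A, (forall e, e \in l -> S e) /\
    forall P, dspec d P -> exists e, e \in l /\ ~ P e.
Proof.
move=> Hcov.
have gen1 : dgen S 1.
  apply: contrapT => nS1.
  have n1 n : ~ dgen S (1 ^+ n) by rewrite expr1n.
  have [P [hP [SP _]]] := exists_dprime_avoiding (dgen_diff_ideal S) n1.
  by have [e [Se Pe]] := Hcov P hP; apply: Pe; apply: SP; exact: dgen_gen.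
have [l [Sl gl]] := dgen_finite gen1.
exists l; split=> // P hP; apply: contrapT => /forallNP nl.
have lP : dgen (fun e => e \in l) `<=` P.
  apply: dgen_min; first by split; [exact: hP.1.1 | exact: hP.2].
  by move=> e le; apply: contrapT => Pe; exact: nl e (conj le Pe).
exact: prime_not1 hP.1 (lP _ gl).
Qed.
End DifferentialRing.

Section StructureSheaf.
Variables (A : comPzRingType) (m : nat) (d : 'I_m -> A -> A).
Hypothesis Hd : diff_structure d.

Local Notation ideal_of q := (proj1_sig q).

Lemma point_prime (q : Xpt d) : prime_ideal (ideal_of q). Proof. exact: (proj2_sig q).1. Qed.
Lemma point_der (q : Xpt d) i x : ideal_of q x -> ideal_of q (d i x).
Proof. exact: (proj2_sig q).2. Qed.
Lemma point_not1 (q : Xpt d) : ~ ideal_of q 1. Proof. exact: prime_not1 (point_prime q). Qed.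

Definition has_rep (f : sect d) (q : Xpt d) (x : A * A) :=
  ~ ideal_of q x.2 /\ f q = frac (ideal_of q) x.

Lemma rep_iota a q : has_rep (iotaO a) q (a, 1).
Proof. by split=> //; exact: point_not1. Qed.

Lemma rep_s0 q : has_rep (s0 (d := d)) q (0, 1). Proof. exact: rep_iota. Qed.
Lemma rep_s1 q : has_rep (s1 (d := d)) q (1, 1). Proof. exact: rep_iota. Qed.

Lemma rep_add f g q x y : has_rep f q x -> has_rep g q y ->
  has_rep (sadd f g) q (x.1 * y.2 + y.1 * x.2, x.2 * y.2).
Proof.
move=> [hx ef] [hy eg]; split; first exact: (prime_nM (point_prime q) hx hy).
by rewrite /sadd ef eg frac_add //; exact: point_prime.
Qed.

Lemma rep_mul f g q x y : has_rep f q x -> has_rep g q y ->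
  has_rep (smul f g) q (x.1 * y.1, x.2 * y.2).
Proof.
move=> [hx ef] [hy eg]; split; first exact: (prime_nM (point_prime q) hx hy).
by rewrite /smul ef eg frac_mul //; exact: point_prime.
Qed.

Lemma rep_opp f q x : has_rep f q x -> has_rep (sopp f) q (- x.1, x.2).
Proof. by move=> [hx ef]; split=> //; rewrite /sopp ef frac_opp //; exact: point_prime. Qed.

Lemma rep_der i f q x : has_rep f q x ->
  has_rep (sder i f) q (d i x.1 * x.2 - x.1 * d i x.2, x.2 * x.2).
Proof.
move=> [hx ef]; split; first exact: (prime_nM (point_prime q) hx hx).
by rewrite /sder ef frac_der //; exact: point_prime.
Qed.

Fixpoint spow (h : sect d) (n : nat) : sect d :=
  if n is n'.+1 then smul h (spow h n') else s1 (d := d).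

Lemma rep_pow h q x n : has_rep h q x -> has_rep (spow h n) q (x.1 ^+ n, x.2 ^+ n).
Proof.
move=> hx; elim: n => [|n IH] /=; first by rewrite !expr0; exact: rep_s1.
by rewrite !exprS; exact: rep_mul hx IH.
Qed.

Lemma rep_eq_loc f g q x y : has_rep f q x -> has_rep g q y ->
  (exists s, ~ ideal_of q s /\ s * (x.1 * y.2 - y.1 * x.2) = 0) -> f q = g q.
Proof.
move=> [hx ->] [hy ->] [s [hs e]].
by apply: frac_class => //; [exact: point_prime | split=> //; exists s].
Qed.

Lemma rep_eq f g q x y : has_rep f q x -> has_rep g q y ->
  x.1 * y.2 = y.1 * x.2 -> f q = g q.
Proof.
move=> hx hy e; apply: (rep_eq_loc hx hy); exists 1.
by split; [exact: point_not1 | rewrite e subrr mulr0].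
Qed.

Lemma regular_basic f p : regular_at f p -> exists e a b, ~ ideal_of p e /\
  forall q : Xpt d, ~ ideal_of q e -> has_rep f q (a, b).
Proof.
move=> [W [[E hE] [Wp [a [b Hab]]]]].
have [e /not_implyP [Ee nep]] : exists e, ~ (E e -> ideal_of p e).
  by apply/existsNP => Ep; apply: ((hE p).1 Wp) => x /Ep.
exists e, a, b; split=> // q neq.
have Wq : W q by apply/hE => Eq; exact: neq (Eq e Ee).
have [nbq fq] := Hab q Wq; split=> //.
by apply/funext => z; apply/propext; exact: fq.
Qed.

Lemma rep_exists f q : Osec f -> exists x, has_rep f q x.
Proof.
move=> /(_ q) /regular_basic [e [a [b [neq Hab]]]].
by exists (a, b); exact: Hab.
Qed.

Lemma pow_zero_stable h q n k : Osec h -> spow h n q = s0 q -> spow h (n + k) q = s0 q.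
Proof.
move=> hreg hn; elim: k => [|k IH]; first by rewrite addn0.
rewrite addnS /=; have [x hx] := rep_exists q hreg.
have hz : has_rep (spow h (n + k)) q (0, 1) by split; [exact: point_not1 | rewrite IH].
by apply: (rep_eq (rep_mul hx hz) (rep_s0 q)); rewrite /=; ring.
Qed.

(* f(q) lies in the maximal ideal of A_q. *)
Definition vanishes (f : sect d) (q : Xpt d) := exists z, f q z /\ ideal_of q z.1.

Lemma vanishes_rep f q x : has_rep f q x -> (vanishes f q <-> ideal_of q x.1).
Proof.
have hq := point_prime q; have hqi := prime_ideal_ideal hq.
move=> [hx ef]; rewrite /vanishes ef; split; last first.
  by move=> h; exists x; split=> //; exact: frac_refl.
move=> [z [[hz [s [hs e]]] hz1]].
have : ideal_of q (s * (x.1 * z.2)).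
  have -> : s * (x.1 * z.2) = s * (x.1 * z.2 - z.1 * x.2) + s * (z.1 * x.2) by ring.
  by rewrite e add0r; apply: (idealM hqi); exact: (idealMr hqi).
by case/(primeM hq) => // /(primeM hq) [].
Qed.

Lemma iota_add x y : iotaO (d := d) (x + y) = sadd (iotaO x) (iotaO y).
Proof.
apply/funext => q; apply: (rep_eq (rep_iota _ q) (rep_add (rep_iota x q) (rep_iota y q))).
by rewrite /=; ring.
Qed.

Lemma iota_mul x y : iotaO (d := d) (x * y) = smul (iotaO x) (iotaO y).
Proof.
apply/funext => q; apply: (rep_eq (rep_iota _ q) (rep_mul (rep_iota x q) (rep_iota y q))).
by rewrite /=; ring.
Qed.

Lemma iota_der i x : iotaO (d := d) (d i x) = sder i (iotaO x).
Proof.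
apply/funext => q; apply: (rep_eq (rep_iota _ q) (rep_der i (rep_iota x q))).
by rewrite /= (der1 Hd); ring.
Qed.
End StructureSheaf.

Section Subring.
Variables (A : comPzRingType) (m : nat) (d : 'I_m -> A -> A).
Hypotheses (Hd : diff_structure d) (HK : keigher d).
Variable D : sect d -> Prop.
Hypotheses (HD : dsubring D) (HiD : forall a, D (iotaO (d := d) a)).

Local Notation ideal_of q := (proj1_sig q).

Lemma D_regular f : D f -> Osec f. Proof. exact: HD.1. Qed.
Lemma D_s0 : D (s0 (d := d)). Proof. exact: HD.2.1. Qed.
Lemma D_s1 : D (s1 (d := d)). Proof. exact: HD.2.2.1. Qed.
Lemma D_add f g : D f -> D g -> D (sadd f g). Proof. exact: HD.2.2.2.1. Qed.
Lemma D_opp f : D f -> D (sopp f). Proof. exact: HD.2.2.2.2.1. Qed.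
Lemma D_mul f g : D f -> D g -> D (smul f g). Proof. exact: HD.2.2.2.2.2.1. Qed.
Lemma D_der i f : D f -> D (sder i f). Proof. exact: HD.2.2.2.2.2.2. Qed.
Lemma D_pow h n : D h -> D (spow h n).
Proof. by move=> Dh; elim: n => [|n IH] /=; [exact: D_s1 | exact: D_mul]. Qed.

Section DPrime.
Variable Q : sect d -> Prop.
Hypothesis hQ : dspecD D Q.

Lemma Q_D f : Q f -> D f. Proof. exact: hQ.1. Qed.
Lemma Q_s0 : Q (s0 (d := d)). Proof. exact: hQ.2.1. Qed.
Lemma Q_add f g : Q f -> Q g -> Q (sadd f g). Proof. exact: hQ.2.2.1. Qed.
Lemma Q_mul f g : D f -> Q g -> Q (smul f g). Proof. exact: hQ.2.2.2.1. Qed.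
Lemma Q_not1 : ~ Q (s1 (d := d)). Proof. exact: hQ.2.2.2.2.1. Qed.
Lemma Q_prime f g : D f -> D g -> Q (smul f g) -> Q f \/ Q g.
Proof. exact: hQ.2.2.2.2.2.1. Qed.
Lemma Q_der i f : Q f -> Q (sder i f). Proof. exact: hQ.2.2.2.2.2.2. Qed.

Lemma Q_opp f : Q f -> Q (sopp f).
Proof.
move=> Qf; have Df := Q_D Qf.
have -> : sopp f = smul (sopp (s1 (d := d))) f.
  apply/funext => q; have [x hx] := rep_exists q (D_regular Df).
  apply: (rep_eq (rep_opp hx) (rep_mul (rep_opp (rep_s1 q)) hx)).
  by rewrite /=; ring.
by apply: Q_mul Qf; apply: D_opp; exact: D_s1.
Qed.

Lemma Q_pow h n : D h -> Q (spow h n) -> Q h.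
Proof.
move=> Dh; elim: n => [|n IH] /=; first by move/Q_not1.
by case/(Q_prime Dh (D_pow n Dh)).
Qed.

Lemma iota_star_dspec : dspec d (iota_star Q).
Proof.
rewrite /iota_star; split; last by move=> i x Qx; rewrite (iota_der Hd); exact: Q_der.
split; first split; first exact: Q_s0.
- split; first by move=> x y Qx Qy; rewrite iota_add; exact: Q_add.
  by move=> x y Qy; rewrite iota_mul; apply: Q_mul.
split; first exact: Q_not1.
by move=> x y; rewrite iota_mul; apply: Q_prime.
Qed.
End DPrime.

(* If g is 0 on D(e) and equals a / b on D(c), then c e a is nilpotent in A
   (Keigher), so a power of iota(e) g is 0 on D(c). *)
Lemma pow_vanish_basic g e c a b :
  (forall q : Xpt d, ~ ideal_of q e -> g q = s0 q) ->
  (forall q : Xpt d, ~ ideal_of q c -> has_rep g q (a, b)) ->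
  exists n, forall q : Xpt d, ~ ideal_of q c -> spow (smul (iotaO e) g) n q = s0 q.
Proof.
move=> g0 gab.
have [n hn] : exists n, (c * e * a) ^+ n = 0.
  apply: (locally_zero_nilpotent Hd HK) => P hP nPce.
  pose q := exist _ P hP : Xpt d.
  have nPc : ~ P c by move=> Pc; apply: nPce; exact: (idealMr hP.1.1 Pc).
  have nPe : ~ P e by move=> Pe; apply: nPce; exact: (idealM hP.1.1 Pe).
  have [_ ga] := gab q nPc.
  have : frac P (0, 1) (0, 1) by apply: (frac_refl hP.1); exact: (prime_not1 hP.1).
  rewrite -[frac P (0, 1)]/(s0 q) -(g0 q nPe) ga => -[_ [s [hs es]]].
  by exists s; split=> //; move: es; rewrite /= mulr1 mul0r subr0.
exists n => q nqc.
have hv := rep_pow n (rep_mul (rep_iota e q) (gab q nqc)).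
apply: (rep_eq_loc hv (rep_s0 q)); exists (c ^+ n).
split; first exact: (prime_nX (point_prime q) nqc).
by rewrite /= mulr1 mul0r subr0 -exprMn !mulrA.
Qed.

(* Globalization by quasi-compactness: if g ∈ D is 0 on D(e), then some
   power of iota(e) g is the zero section. *)
Lemma pow_vanish g e : D g -> (forall q : Xpt d, ~ ideal_of q e -> g q = s0 q) ->
  exists N, spow (smul (iotaO e) g) N = s0 (d := d).
Proof.
move=> Dg g0; have Dh := D_mul (HiD e) Dg.
pose S c := exists a b, forall q : Xpt d, ~ ideal_of q c -> has_rep g q (a, b).
have [l [Sl lcov]] : exists l : seq A, (forall c, c \in l -> S c) /\
    forall P, dspec d P -> exists c, c \in l /\ ~ P c.
  apply: (dspec_finite_cover Hd HK) => P hP.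
  have [c [a [b [nPc gab]]]] := regular_basic (D_regular Dg (exist _ P hP)).
  by exists c; split=> //; exists a, b.
have [N hN] : exists N, forall c, c \in l ->
    forall q : Xpt d, ~ ideal_of q c -> spow (smul (iotaO e) g) N q = s0 q.
  elim: l Sl {lcov} => [|c l IH] Sl; first by exists 0%N.
  have [N1 h1] := IH (fun c' lc' => Sl c' (mem_behead (s := c :: l) lc')).
  have [a [b gab]] := Sl c (mem_head c l).
  have [n hn] := pow_vanish_basic g0 gab.
  exists (n + N1)%N => c'; rewrite inE => /orP [/eqP -> | lc'] q nqc'.
    exact: (pow_zero_stable N1 (D_regular Dh) (hn q nqc')).
  by rewrite addnC; exact: (pow_zero_stable n (D_regular Dh) (h1 c' lc' q nqc')).
exists N; apply/funext => q.
by have [c [lc nqc]] := lcov _ (proj2_sig q); exact: (hN c lc q nqc).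
Qed.

Section PointOfPrime.
Variable Q : sect d -> Prop.
Hypothesis hQ : dspecD D Q.
Variable pt : Xpt d.
Hypothesis Hpt : forall a, ideal_of pt a <-> Q (iotaO a).

Lemma mem_of_vanishing_near g e : D g -> ~ ideal_of pt e ->
  (forall q : Xpt d, ~ ideal_of q e -> g q = s0 q) -> Q g.
Proof.
move=> Dg npe g0; have [N hN] := pow_vanish Dg g0.
have : Q (spow (smul (iotaO e) g) N) by rewrite hN; exact: Q_s0.
move/(Q_pow hQ (D_mul (HiD e) Dg))/(Q_prime hQ (HiD e) Dg).
by case=> // /Hpt.
Qed.

(* f ∈ Q iff f(pt) lies in the maximal ideal of A_pt: near pt, f = a / b,
   and b f - a ∈ D vanishes near pt, hence lies in Q. *)
Lemma mem_iff_vanishes f : D f -> (Q f <-> vanishes f pt).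
Proof.
move=> Df; have [e [a [b [npe fab]]]] := regular_basic (D_regular Df pt).
have [npb _] := fab pt npe.
pose g := sadd (smul (iotaO b) f) (sopp (iotaO a)).
have Dg : D g by apply: D_add; [exact: D_mul | exact: D_opp].
have rep_g q y : has_rep f q y ->
    has_rep g q (b * y.1 * 1 + - a * (1 * y.2), 1 * y.2 * 1).
  by move=> hy; exact: (rep_add (rep_mul (rep_iota b q) hy) (rep_opp (rep_iota a q))).
have Qg : Q g.
  apply: (mem_of_vanishing_near Dg npe) => q nqe.
  by apply: (rep_eq (rep_g q _ (fab q nqe)) (rep_s0 q)); rewrite /=; ring.
have ia : iotaO a = sadd (smul (iotaO b) f) (sopp g).
  apply/funext => q; have [y hy] := rep_exists q (D_regular Df).
  apply: (rep_eq (rep_iota a q) (rep_add (rep_mul (rep_iota b q) hy) (rep_opp (rep_g q y hy)))).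
  by rewrite /=; ring.
have ibf : smul (iotaO b) f = sadd g (iotaO a).
  apply/funext => q; have [y hy] := rep_exists q (D_regular Df).
  apply: (rep_eq (rep_mul (rep_iota b q) hy) (rep_add (rep_g q y hy) (rep_iota a q))).
  by rewrite /=; ring.
rewrite (vanishes_rep (fab pt npe)) /=; split.
  by move=> Qf; apply/Hpt; rewrite ia; apply: (Q_add hQ); [exact: Q_mul | exact: Q_opp].
move=> /Hpt Qa; have : Q (smul (iotaO b) f) by rewrite ibf; exact: Q_add.
by case/(Q_prime hQ (HiD b) Df) => // /Hpt.
Qed.
End PointOfPrime.

Definition stalk_ideal (p : Xpt d) : sect d -> Prop := fun f => D f /\ vanishes f p.

Lemma stalk_ideal_dspec p : dspecD D (stalk_ideal p).
Proof.
have hp := point_prime p; have hpi := prime_ideal_ideal hp.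
have rep f : D f -> exists x, has_rep f p x by move=> Df; exact: rep_exists p (D_regular Df).
split; first by move=> f [].
split; first by split; [exact: D_s0 | apply/(vanishes_rep (rep_s0 p)); exact: ideal0].
split.
  move=> f g [Df vf] [Dg vg]; split; first exact: D_add.
  have [x hx] := rep f Df; have [y hy] := rep g Dg.
  move/(vanishes_rep hx): vf => px; move/(vanishes_rep hy): vg => py.
  by apply/(vanishes_rep (rep_add hx hy)); apply: (idealD hpi); exact: (idealMr hpi).
split.
  move=> f g Df [Dg vg]; split; first exact: D_mul.
  have [x hx] := rep f Df; have [y hy] := rep g Dg.
  by move/(vanishes_rep hy): vg => py; apply/(vanishes_rep (rep_mul hx hy)); exact: (idealM hpi).
split; first by move=> [_ /(vanishes_rep (rep_s1 p))]; exact: point_not1.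
split.
  move=> f g Df Dg [_ vfg]; have [x hx] := rep f Df; have [y hy] := rep g Dg.
  move/(vanishes_rep (rep_mul hx hy)): vfg => /(primeM hp) [px|py].
    by left; split=> //; apply/(vanishes_rep hx).
  by right; split=> //; apply/(vanishes_rep hy).
move=> i f [Df vf]; split; first exact: D_der.
have [x hx] := rep f Df; move/(vanishes_rep hx): vf => px.
apply/(vanishes_rep (rep_der Hd i hx)); apply: (idealB hpi); apply: (idealMr hpi) => //.
exact: point_der.
Qed.

Lemma iota_star_stalk_ideal p : seteq (iota_star (stalk_ideal p)) (ideal_of p).
Proof.
move=> a; rewrite /iota_star /stalk_ideal (vanishes_rep (rep_iota a p)).
by split=> [[]|pa] //; split.
Qed.

Lemma nonvanishing_basic f p : D f -> ~ vanishes f p ->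
  exists c, ~ ideal_of p c /\ forall q : Xpt d, ~ ideal_of q c -> ~ vanishes f q.
Proof.
move=> Df nvp; have [e [a [b [npe fab]]]] := regular_basic (D_regular Df p).
have npa : ~ ideal_of p a by move=> pa; apply: nvp; apply/(vanishes_rep (fab p npe)).
exists (e * a); split; first exact: (prime_nM (point_prime p) npe npa).
move=> q nqea; have hqi := prime_ideal_ideal (point_prime q).
have nqe : ~ ideal_of q e by move=> qe; apply: nqea; exact: (idealMr hqi qe).
by rewrite (vanishes_rep (fab q nqe)) => qa; apply: nqea; exact: (idealM hqi qa).
Qed.

Lemma iota_star_injective Q1 Q2 : dspecD D Q1 -> dspecD D Q2 ->
  seteq (iota_star Q1) (iota_star Q2) -> seteq Q1 Q2.
Proof.
move=> hQ1 hQ2 e12; pose p := exist _ _ (iota_star_dspec hQ1) : Xpt d.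
have H1 := mem_iff_vanishes hQ1 (pt := p) (fun a => iff_refl _).
have H2 := mem_iff_vanishes hQ2 (pt := p) e12.
move=> f; split=> Qf.
  by have Df := Q_D hQ1 Qf; apply/(H2 f Df)/(H1 f Df).
by have Df := Q_D hQ2 Qf; apply/(H1 f Df)/(H2 f Df).
Qed.

Lemma iota_star_surjective P : dspec d P ->
  exists Q, dspecD D Q /\ seteq (iota_star Q) P.
Proof.
move=> hP; exists (stalk_ideal (exist _ P hP)).
by split; [exact: stalk_ideal_dspec | exact: iota_star_stalk_ideal].
Qed.

Lemma iota_star_continuous C : kclosed (dspec d) C ->
  kclosed (dspecD D) (fun Q => C (iota_star Q)).
Proof.
move=> [E hE]; exists (fun f => exists2 a, E a & f = iotaO a) => Q hQ.
rewrite (hE _ (iota_star_dspec hQ)); split.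
  by move=> EQ f [a Ea ->]; exact: EQ.
by move=> h a Ea; apply: h; exists a.
Qed.

(* The image of V(E') is V(E), where c ∈ E when some f ∈ E' is outside D
   or vanishes nowhere on D(c). *)
Lemma iota_star_closed C : kclosed (dspecD D) C ->
  kclosed (dspec d) (fun P => exists Q, dspecD D Q /\ C Q /\ seteq (iota_star Q) P).
Proof.
move=> [E' hE'].
exists (fun c => exists f, E' f /\ (D f -> forall q : Xpt d, ~ ideal_of q c -> ~ vanishes f q)).
move=> P hP; pose p := exist _ P hP : Xpt d; split.
  move=> [Q [hQ [CQ QP]]] c [f [E'f nvf]].
  have Qf := (hE' Q hQ).1 CQ f E'f; have Df := Q_D hQ Qf.
  pose q := exist _ _ (iota_star_dspec hQ) : Xpt d.
  have vq : vanishes f q by apply/(mem_iff_vanishes hQ (pt := q) (fun a => iff_refl _) Df).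
  by apply: contrapT => nPc; apply: (nvf Df q) vq => /(QP c).
move=> EP; exists (stalk_ideal p); split; first exact: stalk_ideal_dspec.
split; last exact: iota_star_stalk_ideal.
apply/(hE' _ (stalk_ideal_dspec p)) => f E'f.
have Df : D f.
  apply: contrapT => nDf; apply: (prime_not1 hP.1); apply: EP.
  by exists f; split=> // /nDf.
split=> //; apply: contrapT => nvf.
have [c [npc nvc]] := nonvanishing_basic Df nvf.
by apply: npc; apply: EP; exists f; split=> // _.
Qed.
End Subring.

Theorem theorem3p2 (A : comPzRingType) (m : nat) (d : 'I_m -> A -> A)
  (Hd : diff_structure d) (HK : keigher d)
  (D : sect d -> Prop) (HD : dsubring D) (HiD : forall a, D (iotaO (d:=d) a)) :
  homeo (dspecD D) (kclosed (dspecD D)) (dspec d) (kclosed (dspec d))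
    (iota_star (d:=d)).
Proof.
split; first by move=> Q; exact: iota_star_dspec.
split; first exact: iota_star_injective.
split; first exact: iota_star_surjective.
split; first exact: iota_star_continuous.
exact: iota_star_closed.
Qed.
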